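(* The category $\mathbf{gOS}^{op}$ is Gröbner.
   Context: Gröbner categories. Let $\mathcal{C}$ be a small category and $c$ an object. An admissible order on the morphisms out of $c$ is a choice, for every object $c'$, of a well-order $\preceq_{c'}$ on $\mathrm{Hom}(c,c')$ such that $f\prec_{c'} f'$ implies $g\circ f\prec_{c''} g\circ f'$ for all $g:c'\to c''$. On morphisms out of $c$ put the preorder $f\le g$ iff $g=h\circ f$ for some $h$; $|c/\mathcal{C}|$ is the associated poset. A poset is Noetherian if every sequence $x_1,x_2,\dots$ has $i<j$ with $x_i\le x_j$. $\mathcal{C}$ is Gröbner if for every object $c$: (G1) morphisms out of $c$ admit an admissible order, and (G2) $|c/\mathcal{C}|$ is Noetherian. The category $\mathbf{gOS}$ of graded ordered surjections has objects $\underline{n}=\{1,\dots,n\}$ for $n\ge 0$. A morphism $f:\underline{n}\to\underline{m}$ is a surjection $f$ such that $\min f^{-1}(i)<\min f^{-1}(j)$ whenever $i<j$, together with a grading $g_f:\underline{m}\to\mathbb{N}$. For $f:\underline{n}\to\underline{m}$ and $h:\underline{m}\to\underline{k}$, the composite $h\circ f$ is the composite of maps with grading $g_{h\circ f}(i)=g_h(i)+\sum_{j\in h^{-1}(i)}g_f(j)$. *)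

From mathcomp Require Import all_boot all_order.
Set Implicit Arguments. Unset Strict Implicit. Unset Printing Implicit Defensive.
Import Order.TTheory.

(* Only the data (objects, hom-types, composition) enter the notion of *)
(* Groebner category, so we only package the data.                    *)

Record cat_data := CatData {
  Obj : Type;
  Hom : Obj -> Obj -> Type;
  comp : forall a b c : Obj, Hom b c -> Hom a b -> Hom a c
}.
Arguments Hom : clear implicits.
Arguments comp {_ _ _ _} _ _.

Definition op_cat (C : cat_data) : cat_data :=
  @CatData (Obj C) (fun a b => Hom C b a)
           (fun a b c (g : Hom C c b) (f : Hom C b a) => @comp C c b a f g).

Definition is_well_order (T : Type) (le : T -> T -> Prop) : Prop :=
  [/\ (forall x, le x x),
      (forall x y, le x y -> le y x -> x = y),
      (forall x y z, le x y -> le y z -> le x z),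
      (forall x y, le x y \/ le y x)
    & well_founded (fun x y => le x y /\ x <> y)].

Definition strict_of (T : Type) (le : T -> T -> Prop) (x y : T) : Prop :=
  le x y /\ x <> y.

Definition admissible_order (C : cat_data) (c : Obj C)
    (le : forall c' : Obj C, Hom C c c' -> Hom C c c' -> Prop) : Prop :=
  (forall c', is_well_order (le c')) /\
  (forall (c' c'' : Obj C) (g : Hom C c' c'') (f f' : Hom C c c'),
      strict_of (le c') f f' -> strict_of (le c'') (comp g f) (comp g f')).

Definition under_le (C : cat_data) (c : Obj C)
    (x y : {c' : Obj C & Hom C c c'}) : Prop :=
  exists h : Hom C (projT1 x) (projT1 y), projT2 y = comp h (projT2 x).

Definition noetherian (T : Type) (le : T -> T -> Prop) : Prop :=
  forall s : nat -> T, exists i j : nat, (i < j)%N /\ le (s i) (s j).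

Definition groebner (C : cat_data) : Prop :=
  forall c : Obj C,
    (exists le, @admissible_order C c le) /\ noetherian (@under_le C c).

(* The object n stands for {1,..,n}; we use 'I_n = {0,..,n-1}, with    *)
(* the same order, so ordered surjections correspond exactly.          *)

(* min f^{-1}(i)  (for surjective f the preimage is nonempty) *)
Definition minpre (n m : nat) (f : {ffun 'I_n -> 'I_m}) (i : 'I_m) : nat :=
  \big[Order.min/n]_(k : 'I_n | f k == i) (k : nat).

Definition ordered_surj (n m : nat) (f : {ffun 'I_n -> 'I_m}) : bool :=
  [forall i : 'I_m, exists a : 'I_n, f a == i] &&
  [forall i : 'I_m, forall j : 'I_m, (i < j)%N ==> (minpre f i < minpre f j)%N].

Record gOS_hom (n m : nat) := GOSHom {
  gmap : {ffun 'I_n -> 'I_m};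
  ggrade : {ffun 'I_m -> nat};
  gmapP : ordered_surj gmap
}.

Lemma minpre_spec (n m : nat) (f : {ffun 'I_n -> 'I_m}) (i : 'I_m) (a : 'I_n) :
  f a = i ->
  exists2 b : 'I_n, f b = i & minpre f i = b /\ forall k, f k = i -> (b <= k)%N.
Proof.
move=> fa.
have Pa : f a == i by rewrite fa.
rewrite /minpre (bigmin_eq_arg n a (fun k => f k == i) (fun k : 'I_n => (k : nat)) Pa);
  last by move=> l _; apply: ltnW.
case: (@arg_minP _ _ _ a (fun k => f k == i) (fun k : 'I_n => (k : nat)) Pa)
  => k Pk kmin.
exists k; first by apply/eqP.
by split => // l /eqP fl; exact: kmin.
Qed.

Lemma ordered_surj_comp (n m p : nat) (f : {ffun 'I_n -> 'I_m})
  (h : {ffun 'I_m -> 'I_p}) :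
  ordered_surj f -> ordered_surj h ->
  ordered_surj [ffun a => h (f a)].
Proof.
move=> /andP[/forallP fs /forallP fo] /andP[/forallP hs /forallP ho].
have key : forall i : 'I_p, exists x : 'I_m,
    [/\ h x = i, minpre h i = x & minpre [ffun a => h (f a)] i = minpre f x].
  move=> i; have /existsP[y /eqP hy] := hs i.
  have [x hx [mhx xmin]] := minpre_spec hy.
  have /existsP[a /eqP fa] := fs x.
  have [b fb [mfb bmin]] := minpre_spec fa.
  exists x; split => //; rewrite mfb.
  have hfb : [ffun a => h (f a)] b = i by rewrite ffunE fb.
  have [c hfc [-> cmin]] := minpre_spec hfb.
  apply/eqP; rewrite eqn_leq; apply/andP; split; first by apply: cmin.
  move: hfc; rewrite ffunE => hfc.
  have := xmin _ hfc; rewrite leq_eqVlt => /orP[/eqP xe|xlt].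
    by apply: bmin; apply: val_inj.
  have /implyP/(_ xlt) := forallP (fo x) (f c).
  have /existsP[c' /eqP fc'] := fs (f c).
  have [d fd [mfd dmin]] := minpre_spec (erefl (f c)).
  rewrite mfb mfd => bd; apply: ltnW; apply: (leq_trans bd); exact: dmin.
apply/andP; split.
  apply/forallP => i; have /existsP[x /eqP hx] := hs i.
  have /existsP[a /eqP fa] := fs x.
  by apply/existsP; exists a; rewrite ffunE fa hx.
apply/forallP => i; apply/forallP => j; apply/implyP => ij.
have [x [hx mhx ex]] := key i; have [y [hy mhy ey]] := key j.
rewrite ex ey.
have := implyP (forallP (ho i) j) ij; rewrite mhx mhy => xy.
exact: (implyP (forallP (fo x) y) xy).
Qed.

Definition gOS_comp (n m p : nat) (h : gOS_hom m p) (f : gOS_hom n m) :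
    gOS_hom n p :=
  @GOSHom n p [ffun a => gmap h (gmap f a)]
    [ffun i => ggrade h i + \sum_(j : 'I_m | gmap h j == i) ggrade f j]
    (ordered_surj_comp (gmapP f) (gmapP h)).

Definition gOS : cat_data := @CatData nat gOS_hom gOS_comp.

(* Morphisms out of n in gOS^op are the graded ordered surjections f : m -> n.

   (G1) Order them lexicographically, first by the values f(1), ..., f(m) and
   then by the grading.  Precomposing with an ordered surjection g : p -> m
   keeps a first difference of values visible, at the first point of the fibre
   of g over the position where f and f' first differ; if the values agree,
   precomposition adds the same amount to both gradings.

   (G2) Encode f by the word whose k-th letter is (f(k), [k is the first point
   of its fibre]).  If the word of f is a subword of the word of f', sending
   each point of f' to the last embedded point of the same fibre before it is
   an ordered surjection h with f' = f h, and the grading of h can absorb any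
   pointwise larger grading of f'.  Higman's lemma for words over the finite
   alphabet n x bool and Dickson's lemma for the gradings then give (G2). *)

From mathcomp Require Import all_boot all_order.
From Stdlib Require Import Classical ClassicalEpsilon Wellfounded.
Set Implicit Arguments. Unset Strict Implicit. Unset Printing Implicit Defensive.
Import Order.TTheory.

Lemma noetherian_mono (T : Type) (R R' : T -> T -> Prop) :
  (forall x y, R x y -> R' x y) -> noetherian R -> noetherian R'.
Proof. by move=> RR' NR s; have [i [j [ij /RR' ?]]] := NR s; exists i, j. Qed.

Lemma noetherian_comap (T U : Type) (F : T -> U) (R : U -> U -> Prop) :
  noetherian R -> noetherian (fun x y => R (F x) (F y)).
Proof. by move=> NR s; apply: NR (F \o s). Qed.

Lemma noetherian_leq : noetherian leq.
Proof.
move=> s; suff: forall v i, s i = v -> exists i0 j, i0 < j /\ s i0 <= s j.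
  by move/(_ _ 0 erefl).
elim/ltn_ind=> v IH i siv.
case: (leqP (s i) (s i.+1)) => [le_next | lt_next]; first by exists i, i.+1.
by apply: (IH _ _ i.+1 erefl); rewrite -siv.
Qed.

Lemma increasing_chain (Q : nat -> nat -> Prop) (i0 : nat) :
  (forall i, i0 <= i -> exists2 j, i < j & Q i j) ->
  exists phi : nat -> nat, forall k, phi k < phi k.+1 /\ Q (phi k) (phi k.+1).
Proof.
move=> next_ex.
have [next nextP] : exists next, forall i, i0 <= i -> i < next i /\ Q i (next i).
  apply: (choice (fun i j => i0 <= i -> i < j /\ Q i j)) => i.
  by case: (leqP i0 i) => [/next_ex[j ij Qij] | _]; [exists j | exists 0].
have iter_ge k : i0 <= iter k next i0.
  by elim: k => //= k IH; apply: leq_trans IH (ltnW (nextP _ IH).1).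
by exists (fun k => iter k next i0) => k; apply: nextP.
Qed.

Lemma infinitely_often_subseq (P : nat -> Prop) :
  (forall N, exists2 k, N <= k & P k) ->
  exists phi : nat -> nat, forall k, phi k < phi k.+1 /\ P (phi k).
Proof.
move=> P_inf; have [phi phiP] := @increasing_chain (fun _ j => P j) 0 (fun i _ => P_inf i.+1).
by exists (phi \o succn) => k; split; [apply: (phiP k.+1).1 | apply: (phiP k).2].
Qed.

Lemma noetherian_chain (T : Type) (R : T -> T -> Prop) (s : nat -> T) :
  noetherian R ->
  exists phi : nat -> nat, forall k, phi k < phi k.+1 /\ R (s (phi k)) (s (phi k.+1)).
Proof.
move=> NR; pose dead i := ~ exists2 j, i < j & R (s i) (s j).
have [[N0 alive] | no_bound] := classic (exists N0, forall i, N0 <= i -> ~ dead i).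
  by apply: (@increasing_chain (fun i j => R (s i) (s j)) N0) => i /alive /NNPP.
have [phi phiP] : exists phi : nat -> nat, forall k, phi k < phi k.+1 /\ dead (phi k).
  apply: infinitely_often_subseq => N; apply: NNPP => no_dead; apply: no_bound.
  by exists N => i Ni dead_i; apply: no_dead; exists i.
have [i [j [ij Rij]]] := NR (s \o phi).
have [_ dead_i] := phiP i; exfalso; apply: dead_i; exists (phi j) => //.
exact: homo_ltn ltn_trans (fun k => (phiP k).1) _ _ ij.
Qed.

Lemma noetherian_and (T : Type) (R1 R2 : T -> T -> Prop) :
  (forall x y z, R1 x y -> R1 y z -> R1 x z) ->
  noetherian R1 -> noetherian R2 -> noetherian (fun x y => R1 x y /\ R2 x y).
Proof.
move=> R1_trans N1 N2 s; have [phi phiP] := noetherian_chain s N1.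
have [i [j [ij R2ij]]] := N2 (s \o phi).
exists (phi i), (phi j); split; first exact: homo_ltn ltn_trans (fun k => (phiP k).1) _ _ ij.
split=> //; elim: j ij {R2ij} => // j IH; rewrite ltnS leq_eqVlt => /predU1P[-> | ij].
  exact: (phiP j).2.
exact: R1_trans (IH ij) (phiP j).2.
Qed.

Lemma dickson (n : nat) : noetherian (fun u v : 'I_n -> nat => forall i, u i <= v i).
Proof.
suff N k : noetherian (fun u v : 'I_n -> nat => forall i : 'I_n, i < k -> u i <= v i).
  by apply: noetherian_mono (N n) => u v uv i; apply: uv.
elim: k => [|k IH]; first by move=> s; exists 0, 1.
have N_at_k : noetherian (fun u v : 'I_n -> nat => forall i : 'I_n, val i = k -> u i <= v i).
  apply: noetherian_mono (noetherian_comap (fun u => oapp u 0 (insub k)) noetherian_leq).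
  by move=> u v + i ik; rewrite -ik valK.
apply: noetherian_mono (noetherian_and _ IH N_at_k); last first.
  by move=> u v w uv vw i ik; apply: leq_trans (uv i ik) (vw i ik).
by move=> u v [below at_k] i; rewrite ltnS leq_eqVlt => /predU1P[/at_k | /below].
Qed.

Lemma ex_minimal_nat (P : nat -> Prop) :
  (exists n, P n) -> exists n, P n /\ forall m, P m -> n <= m.
Proof.
case=> n; elim/ltn_ind: n => n IH Pn.
have [[m [mn Pm]] | no_smaller] := classic (exists m, m < n /\ P m); first exact: IH Pm.
by exists n; split=> // m Pm; rewrite leqNgt; apply/negP => mn; apply: no_smaller; exists m.
Qed.

Lemma finite_infinitely_often (A : finType) (x : nat -> A) :
  exists a, forall N, exists2 k, N <= k & x k = a.
Proof.
apply: NNPP => none_inf.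
have [bound boundP] : exists bound : A -> nat, forall a k, bound a <= k -> x k <> a.
  apply: (choice (fun a N => forall k, N <= k -> x k <> a)) => a.
  apply: NNPP => unbounded; apply: none_inf; exists a => N; apply: NNPP => none_after.
  by apply: unbounded; exists N => k Nk xk; apply: none_after; exists k.
by apply: (boundP (x (\max_a bound a))) (erefl _); apply: leq_bigmax.
Qed.

Section Higman.
Variable A : finType.
Implicit Types (s : nat -> seq A) (p : seq (seq A)).

Definition bad s := forall i j, i < j -> ~~ subseq (s i) (s j).

Definition extends_bad p := exists2 s, bad s & forall i, i < size p -> s i = nth [::] p i.

Lemma minimal_bad_extension :
  exists next : seq (seq A) -> seq A, forall p, extends_bad p ->
    extends_bad (rcons p (next p)) /\
    forall w, extends_bad (rcons p w) -> size (next p) <= size w.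
Proof.
apply: (choice (fun p w => extends_bad p -> extends_bad (rcons p w) /\
                              forall w', extends_bad (rcons p w') -> size w <= size w')) => p.
have [[s bad_s sp] | ] := classic (extends_bad p); last by exists [::].
have [|k [[w [<- pw]] w_min]] :=
  @ex_minimal_nat (fun k => exists w, size w = k /\ extends_bad (rcons p w)).
  exists (size (s (size p))), (s (size p)); split=> //; exists s => // i.
  rewrite size_rcons ltnS nth_rcons leq_eqVlt => /predU1P[-> | ip].
    by rewrite ltnn eqxx.
  by rewrite ip sp.
by exists w => _; split=> // w' pw'; apply: w_min; exists w'.
Qed.

Lemma minimal_bad_sequence s0 : bad s0 ->
  exists2 M, bad M &
    forall k s, bad s -> (forall i, i < k -> s i = M i) -> size (M k) <= size (s k).
Proof.
move=> bad_s0; have [next nextP] := minimal_bad_extension.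
pose prefix k := iter k (fun p => rcons p (next p)) [::].
pose M k := next (prefix k).
have size_prefix k : size (prefix k) = k by elim: k => //= k IH; rewrite size_rcons IH.
have ext_prefix k : extends_bad (prefix k).
  by elim: k => [|k IH]; [exists s0 | exact: (nextP _ IH).1].
have nth_prefix k i : i < k -> nth [::] (prefix k) i = M i.
  elim: k => // k IH; rewrite ltnS /= nth_rcons size_prefix leq_eqVlt.
  by case/predU1P=> [-> | ik]; rewrite ?ltnn ?eqxx ?ik ?IH.
exists M.
  move=> i j ij; have [s bad_s sM] := ext_prefix j.+1.
  have sM' l : l <= j -> s l = M l by move=> lj; rewrite sM ?size_prefix // nth_prefix.
  by rewrite -!sM' ?(ltnW ij) //; apply: bad_s.
move=> k s bad_s sM; apply: (nextP _ (ext_prefix k)).2; exists s => // i.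
rewrite size_rcons size_prefix nth_rcons size_prefix ltnS leq_eqVlt.
case/predU1P=> [-> | ik]; first by rewrite ltnn eqxx.
by rewrite ik nth_prefix ?sM.
Qed.

Theorem higman : noetherian (fun u v : seq A => subseq u v).
Proof.
move=> s0; apply: NNPP => no_pair.
have [M bad_M M_min] : exists2 M, bad M & forall k s, bad s ->
    (forall i, i < k -> s i = M i) -> size (M k) <= size (s k).
  apply: (@minimal_bad_sequence s0) => i j ij.
  by apply/negP => sub; apply: no_pair; exists i, j.
have M_neq0 k : M k != [::].
  by apply: contraTneq (bad_M k k.+1 (ltnSn k)) => ->; rewrite sub0seq.
have a0 : A by case: (M 0) (M_neq0 0) => // a0.
have [a a_inf] := finite_infinitely_often (fun k => head a0 (M k)).
have [phi phiP] := infinitely_often_subseq a_inf.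
have phi_mono := homo_ltn ltn_trans (fun k => (phiP k).1).
have M_phi k : M (phi k) = a :: behead (M (phi k)).
  by rewrite -(phiP k).2; case: (M (phi k)) (M_neq0 (phi k)).
have phi_ge k : phi 0 <= phi k by case: k => // k; apply/ltnW/phi_mono.
(* Cutting the common head [a] off M (phi 0), M (phi 1), ... keeps M bad
   but is shorter at position phi 0, against the minimality of M. *)
pose s k := if k < phi 0 then M k else behead (M (phi (k - phi 0))).
have bad_s : bad s.
  move=> i j ij; rewrite /s; case: (ltnP j (phi 0)) => [j0 | j0].
    by rewrite (ltn_trans ij j0); apply: bad_M.
  case: (ltnP i (phi 0)) => [i0 | i0].
    apply: contra (bad_M _ _ (leq_trans i0 (phi_ge (j - phi 0)))) => sub.
    by apply: subseq_trans sub _; rewrite {2}M_phi subseq_cons.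
  have lt_ij : phi (i - phi 0) < phi (j - phi 0).
    by apply: phi_mono; rewrite ltn_sub2r // (leq_ltn_trans i0 ij).
  by apply: contra (bad_M _ _ lt_ij) => sub; rewrite M_phi [X in subseq _ X]M_phi /= eqxx.
have s_agree i : i < phi 0 -> s i = M i by rewrite /s => ->.
have := M_min (phi 0) s bad_s s_agree.
by rewrite {1}M_phi /s ltnn subnn /= ltnn.
Qed.

End Higman.

Section WellFoundedLexi.
Local Open Scope order_scope.

Lemma wf_ltn : well_founded (<%O : rel nat).
Proof. by elim/ltn_ind=> n IH; constructor=> m; rewrite ltEnat; apply: IH. Qed.

Lemma ltxi_prodE d1 d2 (T1 : orderType d1) (T2 : orderType d2) (x y : T1 *l T2) :
  (x < y) = (x.1 < y.1) || (x.1 == y.1) && (x.2 < y.2).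
Proof. by rewrite ltEprodlexi; case: (ltgtP x.1 y.1). Qed.

Lemma wf_ltxi_prod d1 d2 (T1 : orderType d1) (T2 : orderType d2) :
  well_founded (<%O : rel T1) -> well_founded (<%O : rel T2) ->
  well_founded (<%O : rel (T1 *l T2)).
Proof.
move=> wf1 wf2 [x1 x2]; elim/(well_founded_ind wf1): x1 x2 => x1 IH1 x2.
elim/(well_founded_ind wf2): x2 => x2 IH2; constructor=> -[y1 y2].
by rewrite ltxi_prodE /= => /orP[/IH1 // | /andP[/eqP-> /IH2]].
Qed.

Lemma wf_ltxi_tuple d (T : orderType d) n :
  well_founded (<%O : rel T) -> well_founded (<%O : rel (n.-tuplelexi T)).
Proof.
move=> wfT; elim: n => [|n IH].
  by move=> t; constructor=> u; rewrite [u]tuple0 [t]tuple0 ltxx.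
pose split_head (t : n.+1.-tuplelexi T) : T *l n.-tuplelexi T := (thead t, behead_tuple t).
apply: wf_incl (wf_inverse_image _ _ _ split_head (wf_ltxi_prod wfT IH)) => t u.
by case: (tupleP t) (tupleP u) => [x t'] [y u']; rewrite [_ < _]ltxi_cons ltEprodlexi.
Qed.

End WellFoundedLexi.

Section OrderByKey.
Variables (T : Type) (d : Order.disp_t) (U : orderType d) (key : T -> U).
Hypothesis key_inj : injective key.

Lemma strict_of_keyE x y :
  strict_of (fun x y => (key x <= key y)%O) x y <-> (key x < key y)%O.
Proof.
rewrite lt_neqAle; split=> [[kxy xy] | /andP[kxy kxy']].
  by rewrite kxy andbT; apply/eqP => /key_inj.
by split=> // xy; move: kxy; rewrite xy eqxx.
Qed.

Lemma is_well_order_key : well_founded (<%O : rel U) ->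
  is_well_order (fun x y => (key x <= key y)%O).
Proof.
move=> wfU; split.
- by move=> x; exact: lexx.
- by move=> x y xy yx; apply: key_inj; apply/eqP; rewrite eq_le xy yx.
- by move=> x y z; exact: le_trans.
- by move=> x y; case/orP: (le_total (key x) (key y)); [left | right].
by apply: wf_incl (wf_inverse_image _ _ _ key wfU) => x y /strict_of_keyE.
Qed.

End OrderByKey.

Lemma gOS_hom_ext m n (f f' : gOS_hom m n) :
  gmap f = gmap f' -> ggrade f = ggrade f' -> f = f'.
Proof.
case: f f' => h d hP [h' d' h'P] /= eq_h <-; move: hP; rewrite eq_h => hP.
by rewrite (bool_irrelevance hP h'P).
Qed.

Lemma minpre_le m n (f : {ffun 'I_m -> 'I_n}) (k : 'I_m) : minpre f (f k) <= k.
Proof. by have [b _ [-> b_min]] := minpre_spec (erefl (f k)); apply: b_min. Qed.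

Section OrderedSurjection.
Variables (m n : nat) (f : gOS_hom m n).

Lemma minpreP (i : 'I_n) :
  exists2 b : 'I_m, gmap f b = i & minpre (gmap f) i = b /\ forall k, gmap f k = i -> b <= k.
Proof.
case: f => h d /= /andP[/forallP/(_ i)/existsP[a /eqP ha] _].
exact: minpre_spec ha.
Qed.

Lemma minpre_mono (i j : 'I_n) : i < j -> minpre (gmap f) i < minpre (gmap f) j.
Proof. by case: f => h d /= /andP[_ /forallP/(_ i)/forallP/(_ j)/implyP]. Qed.

Lemma gmap_lt_minpre (i : 'I_n) (k : 'I_m) : k < minpre (gmap f) i -> gmap f k < i.
Proof.
move=> k_lt; rewrite ltnNge leq_eqVlt; apply/negP => /predU1P[fk_i | lt_i_fk].
  have [b fb [mb b_min]] := minpreP i.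
  by move: k_lt; rewrite mb ltnNge b_min //; apply: val_inj.
have := leq_ltn_trans (minpre_le (gmap f) k) (ltn_trans k_lt (minpre_mono lt_i_fk)).
by rewrite ltnn.
Qed.

End OrderedSurjection.

Section Key.
Variables m n : nat.
Implicit Types f : gOS_hom m n.

Definition tmap f : m.-tuplelexi nat := [tuple val (gmap f i) | i < m].
Definition tgrade f : n.-tuplelexi nat := [tuple ggrade f i | i < n].
Definition gOS_key f : m.-tuplelexi nat *l n.-tuplelexi nat := (tmap f, tgrade f).

Lemma tmap_inj f f' : tmap f = tmap f' -> gmap f = gmap f'.
Proof.
move=> eq_t; apply/ffunP => i; apply: val_inj.
by have := congr1 (fun t => tnth t i) eq_t; rewrite !tnth_mktuple.
Qed.

Lemma tgrade_inj f f' : tgrade f = tgrade f' -> ggrade f = ggrade f'.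
Proof.
by move=> eq_t; apply/ffunP => i; have := congr1 (fun t => tnth t i) eq_t; rewrite !tnth_mktuple.
Qed.

Lemma gOS_key_inj : injective gOS_key.
Proof.
move=> f f' eq_key; apply: gOS_hom_ext.
  exact: tmap_inj (congr1 fst eq_key).
exact: tgrade_inj (congr1 snd eq_key).
Qed.

End Key.

Section KeyComp.
Local Open Scope order_scope.
Variables (p m n : nat) (g : gOS_hom p m) (f f' : gOS_hom m n).

Lemma tmap_comp_lt : tmap f < tmap f' -> tmap (gOS_comp f g) < tmap (gOS_comp f' g).
Proof.
move=> /ltxi_tuplePlt[o eq_before lt_at].
have [b gb [mb _]] := minpreP g o.
apply/ltxi_tuplePlt; exists b => [k kb|]; rewrite !tnth_mktuple !ffunE; last first.
  by move: lt_at; rewrite !tnth_mktuple gb.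
have gk : (gmap g k < o)%N by apply: gmap_lt_minpre; rewrite mb.
by have := eq_before _ gk; rewrite !tnth_mktuple.
Qed.

Lemma tgrade_comp_lt : gmap f = gmap f' ->
  tgrade f < tgrade f' -> tgrade (gOS_comp f g) < tgrade (gOS_comp f' g).
Proof.
move=> eq_map /ltxi_tuplePlt[a eq_before lt_at].
apply/ltxi_tuplePlt; exists a => [i ia|]; rewrite !tnth_mktuple !ffunE eq_map.
  by have := eq_before _ ia; rewrite !tnth_mktuple => ->.
by move: lt_at; rewrite !tnth_mktuple !ltEnat /= ltn_add2r.
Qed.

Lemma gOS_key_comp_lt :
  gOS_key f < gOS_key f' -> gOS_key (gOS_comp f g) < gOS_key (gOS_comp f' g).
Proof.
rewrite !ltxi_prodE /= => /orP[/tmap_comp_lt -> // | /andP[/eqP eq_t /tgrade_comp_lt lt_g]].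
have eq_map := tmap_inj eq_t.
have -> : tmap (gOS_comp f g) = tmap (gOS_comp f' g).
  by apply: eq_from_tnth => i; rewrite !tnth_mktuple /= eq_map.
by rewrite eqxx lt_g ?orbT.
Qed.

End KeyComp.

Lemma gOSop_admissible_order (n : nat) :
  admissible_order (c := n : Obj (op_cat gOS))
    (fun c' (f f' : gOS_hom c' n) => (gOS_key f <= gOS_key f')%O).
Proof.
split=> [c' | c' c'' g f f'].
  apply: is_well_order_key; first exact: gOS_key_inj.
  exact (wf_ltxi_prod (wf_ltxi_tuple (n := c') wf_ltn) (wf_ltxi_tuple (n := n) wf_ltn)).
by rewrite !strict_of_keyE; [apply: gOS_key_comp_lt | apply: gOS_key_inj ..].
Qed.

Lemma subseq_onth_embedding (T : eqType) (s t : seq T) : subseq s t ->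
  exists2 io : nat -> nat, {homo io : i j / i < j} &
    forall i, i < size s -> onth t (io i) = onth s i.
Proof.
elim: t s => [|y t IH] s; first by rewrite subseq0 => /eqP->; exists id.
case: s => [|x s]; first by exists id.
rewrite /=; case: eqP => [<- /IH[io io_mono io_onth] | _ /IH[io io_mono io_onth]].
  exists (fun i => if i is i'.+1 then (io i').+1 else 0).
    by move=> [|i] [|j] //=; rewrite !ltnS => /io_mono.
  by move=> [|i] //= /io_onth.
by exists (succn \o io) => [i j /io_mono | i /io_onth].
Qed.

Definition first_occ m n (f : {ffun 'I_m -> 'I_n}) (k : 'I_m) : bool := minpre f (f k) == k.

Definition word m n (f : gOS_hom m n) : seq ('I_n * bool) :=
  [seq (gmap f k, first_occ (gmap f) k) | k <- enum 'I_m].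

Lemma size_word m n (f : gOS_hom m n) : size (word f) = m.
Proof. by rewrite size_map size_enum_ord. Qed.

Lemma onth_word m n (f : gOS_hom m n) (k : 'I_m) :
  onth (word f) k = Some (gmap f k, first_occ (gmap f) k).
Proof. by rewrite onthE -map_comp (nth_map k) ?size_enum_ord // nth_ord_enum. Qed.

Lemma word_embedding m m' n (f : gOS_hom m n) (f' : gOS_hom m' n) :
  subseq (word f) (word f') ->
  exists io : 'I_m -> 'I_m', [/\ {homo io : k l / k < l},
    forall k, gmap f' (io k) = gmap f k &
    forall k, first_occ (gmap f') (io k) = first_occ (gmap f) k].
Proof.
case/subseq_onth_embedding=> io io_mono; rewrite size_word => io_onth.
have io_lt (k : 'I_m) : io k < m'.
  by rewrite -(size_word f') -onthTE io_onth ?onth_word.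
pose io' k := Ordinal (io_lt k).
have letter_io k : (gmap f' (io' k), first_occ (gmap f') (io' k)) =
                   (gmap f k, first_occ (gmap f) k).
  by apply: Some_inj; rewrite -!onth_word io_onth.
exists io'; split=> [k l /io_mono // | k | k]; first exact (congr1 fst (letter_io k)).
exact (congr1 snd (letter_io k)).
Qed.

Lemma ordered_surj_of_section m m' (h : {ffun 'I_m' -> 'I_m}) (io : 'I_m -> 'I_m') :
  {homo io : k l / k < l} -> (forall k, h (io k) = k) -> (forall p, io (h p) <= p) ->
  ordered_surj h.
Proof.
move=> io_mono h_io io_h.
have minpre_h k : minpre h k = io k.
  have [b hb [-> b_min]] := minpre_spec (h_io k).
  by apply/eqP; rewrite eqn_leq b_min ?h_io // -{1}hb io_h.
apply/andP; split; apply/forallP => k; first by apply/existsP; exists (io k); rewrite h_io.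
by apply/forallP => l; apply/implyP; rewrite !minpre_h; apply: io_mono.
Qed.

Section FactorMap.
Variables (m m' n : nat) (f : gOS_hom m n) (f' : gOS_hom m' n) (io : 'I_m -> 'I_m').
Hypotheses (io_mono : {homo io : k l / k < l})
  (gmap_io : forall k, gmap f' (io k) = gmap f k)
  (first_occ_io : forall k, first_occ (gmap f') (io k) = first_occ (gmap f) k).

Lemma minpre_io (i : 'I_n) : exists2 b, gmap f b = i & minpre (gmap f') i = io b.
Proof.
have [b fb [mb _]] := minpreP f i; exists b => //.
have : first_occ (gmap f) b by rewrite /first_occ fb mb.
by rewrite -first_occ_io /first_occ gmap_io fb => /eqP.
Qed.

Lemma io_leW k l : io k <= io l -> k <= l.
Proof. by apply: contraTT; rewrite -!ltnNge; apply: io_mono. Qed.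

Lemma max_io_below (p : 'I_m') : exists k, [/\ io k <= p, gmap f k = gmap f' p &
  forall l, io l <= p -> gmap f l = gmap f' p -> l <= k].
Proof.
have [b fb mb] := minpre_io (gmap f' p).
have Pb : (io b <= p) && (gmap f b == gmap f' p) by rewrite -mb minpre_le fb eqxx.
case: (@arg_maxnP _ b (fun k => (io k <= p) && (gmap f k == gmap f' p)) val Pb).
by move=> k /andP[kp /eqP fk] k_max; exists k; split=> // l lp fl; apply: k_max; rewrite lp fl eqxx.
Qed.

Lemma factor_gmap : exists2 h : {ffun 'I_m' -> 'I_m}, ordered_surj h &
  forall p, gmap f (h p) = gmap f' p.
Proof.
have [hf hfP] := fin_all_exists max_io_below.
exists [ffun p => hf p]; last by move=> p; rewrite ffunE; case: (hfP p).
apply: (ordered_surj_of_section io_mono) => [k | p]; rewrite ffunE; last by case: (hfP p).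
have [le_k fk k_max] := hfP (io k).
by apply/val_inj/eqP; rewrite eqn_leq (io_leW le_k) k_max // gmap_io.
Qed.

End FactorMap.

Definition lift_grade m n (f : gOS_hom m n) (d : {ffun 'I_n -> nat}) : {ffun 'I_m -> nat} :=
  [ffun k => if first_occ (gmap f) k then d (gmap f k) - ggrade f (gmap f k) else 0].

Lemma lift_grade_factor m m' n (f : gOS_hom m n) (f' : gOS_hom m' n)
    (h : {ffun 'I_m' -> 'I_m}) (hP : ordered_surj h) :
  (forall p, gmap f (h p) = gmap f' p) -> (forall i, ggrade f i <= ggrade f' i) ->
  f' = gOS_comp f (GOSHom (lift_grade f (ggrade f')) hP).
Proof.
move=> fh le_grade; apply: gOS_hom_ext; apply/ffunP => i; rewrite !ffunE /=; first by rewrite fh.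
have [b fb [mb _]] := minpreP f i.
rewrite (bigD1 b) ?fb //= big1 => [|j /andP[/eqP fj jb]]; rewrite ffunE /first_occ.
  by rewrite fb mb eqxx addn0 subnKC.
by rewrite fj mb; case: eqP => // /val_inj bj; rewrite bj eqxx in jb.
Qed.

Lemma word_subseq_factor m m' n (f : gOS_hom m n) (f' : gOS_hom m' n) :
  subseq (word f) (word f') -> (forall i, ggrade f i <= ggrade f' i) ->
  exists h : gOS_hom m' m, f' = gOS_comp f h.
Proof.
case/word_embedding=> io [io_mono gmap_io first_occ_io] le_grade.
have [h hP fh] := factor_gmap io_mono gmap_io first_occ_io.
by exists (GOSHom (lift_grade f (ggrade f')) hP); apply: lift_grade_factor.
Qed.

Lemma gOSop_noetherian (n : nat) : noetherian (@under_le (op_cat gOS) n).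
Proof.
pose word_of (x : {c : nat & gOS_hom c n}) := word (projT2 x).
pose grade_of (x : {c : nat & gOS_hom c n}) : 'I_n -> nat := ggrade (projT2 x).
have word_trans x y z : subseq (word_of x) (word_of y) -> subseq (word_of y) (word_of z) ->
    subseq (word_of x) (word_of z).
  exact: subseq_trans.
have := noetherian_and word_trans
  (noetherian_comap word_of (@higman _)) (noetherian_comap grade_of (@dickson n)).
apply: noetherian_mono => -[c f] [c' f'] [sub le_grade] /=.
by have [h fh] := word_subseq_factor sub le_grade; exists h.
Qed.

Theorem proposition4p8 : groebner (op_cat gOS).
Proof.
move=> n; split; last exact: gOSop_noetherian.
by eexists; apply: gOSop_admissible_order.
Qed.
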